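(* Let $T$ be an HST with parameter $2$ and depth $h$, let $R$ be a set of requests issued at leaves of $T$, and consider a synchronous execution of the Arrow protocol on $T$ with request set $R$. Let $n(\ell)$ be the number of level-$\ell$ blocks of the corresponding hierarchical block partition. Then the total cost of the execution equals $\sum_{\ell=0}^{h-1}\big(n(\ell)-n(\ell+1)\big)\cdot\delta(\ell+1)$, where $\delta(\ell)=2^{\ell+1}-2$.
   Context: HST with parameter $2$, depth $h$: rooted tree, all leaves at the same depth, leaves on level $0$, root on level $h$, each edge from a level-$\ell$ node to a child has length $2^{\ell-1}$; two leaves whose lowest common ancestor is on level $\ell$ are at distance $\delta(\ell)=2^{\ell+1}-2$. A level-$\ell$ subtree is the subtree rooted at a level-$\ell$ node. Arrow protocol: each node $u$ has a pointer $\mathrm{link}(u)$ (itself or a neighbour), initially all pointing towards the node $v_0$ of a dummy request $r_0=(v_0,0)$, with $\mathrm{link}(v_0)=v_0$. A request $r=(v,t)$ issued at $v$ at time $t$: if $\mathrm{link}(v)=v$ it is queued behind the previous request at $v$; else atomically $\mathrm{find}(r)$ is sent to $\mathrm{link}(v)$ and $\mathrm{link}(v):=v$. A node $u$ receiving $\mathrm{find}(r)$ from $w$: if $\mathrm{link}(u)=u$, atomically $r$ is queued behind the last request issued at $u$ and $\mathrm{link}(u):=w$; else atomically forwards to $\mathrm{link}(u)$ and sets $\mathrm{link}(u):=w$. In a synchronous execution each message over an edge takes exactly the edge length. The resulting order is $r_0,r_1,\dots,r_{|R|-1}$ ($r_i=(v_i,t_i)$); the latency of $r_i$ ($i\ge1$)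 is the arrival time of $\mathrm{find}(r_i)$ at $v_{i-1}$ minus $t_i$, and the total cost is the sum of the latencies. Hierarchical block partition: for each level $\ell\in[0,h]$, the index set $\{0,\dots,|R|-1\}$ is partitioned into blocks $b^\ell_0,\dots,b^\ell_{n(\ell)-1}$, which are the maximal sets of consecutive indices (in the Arrow order) whose requests all lie in the same level-$\ell$ subtree of $T$, numbered in increasing order of indices. *)

From mathcomp Require Import all_boot all_order all_algebra.
Set Implicit Arguments. Unset Strict Implicit. Unset Printing Implicit Defensive.
Import Order.TTheory GRing.Theory Num.Theory.
Local Open Scope ring_scope.

(* lvl the level. The edge between a non-root node u and par u (a level      *)
(* lvl u + 1 node) has length 2^(lvl u), i.e. 2^(l-1) for a parent on level  *)
(* l. All leaves are on level 0: every node on a positive level has a child. *)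
Definition is_HST2 (V : finType) (root : V) (par : V -> V) (lvl : V -> nat)
  (h : nat) : Prop :=
  [/\ lvl root = h, par root = root,
      (forall v, v != root -> lvl (par v) = (lvl v).+1)
    & (forall v, (0 < lvl v)%N -> exists c, c != root /\ par c = v)].

Definition anc (V : finType) (par : V -> V) (u x : V) : Prop :=
  exists k, iter k par x = u.

Definition elen (R : realFieldType) (V : finType) (lvl : V -> nat) (u w : V) : R :=
  (2 ^ (minn (lvl u) (lvl w)))%:R.

Definition delta (l : nat) : nat := (2 ^ l.+1 - 2)%N.

(* Initial pointers: every node points to its neighbour on the path to v0;  *)
Definition points_toward (V : finType) (root : V) (par : V -> V) (v0 : V)
  (link0 : V -> V) : Prop :=
  link0 v0 = v0 /\
  forall u, u != v0 ->
    (anc par u v0 -> [/\ link0 u != root, par (link0 u) = u & anc par (link0 u) v0]) /\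
    (~ anc par u v0 -> link0 u = par u).

Definition upd (T : eqType) (U : Type) (f : T -> U) (a : T) (b : U) : T -> U :=
  fun x => if x == a then b else f x.

Section Arrow.
Variables (R : realFieldType) (V : finType) (N : nat).
Variables (lvl : V -> nat) (node : 'I_N.+1 -> V) (time : 'I_N.+1 -> R).

(* Requests are indexed by 'I_N.+1; index 0 is the dummy request r0.          *)
(* A message find(r) in flight: (request, sender, receiver, arrival time).   *)
Definition msg := ('I_N.+1 * V * V * R)%type.

Record config := Config {
  link : V -> V;
  lastreq : V -> 'I_N.+1;
  issued : 'I_N.+1 -> bool;
  msgs : seq msg;
  qpred : 'I_N.+1 -> option 'I_N.+1;
  qtime : 'I_N.+1 -> R
}.

Definition init_config (link0 : V -> V) : config :=
  Config link0 (fun _ => ord0) (fun i => i == ord0) [::]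
         (fun _ => None) (fun _ => 0).

(* t is the earliest pending event time (synchronous execution) *)
Definition earliest (c : config) (t : R) : Prop :=
  (forall j, ~~ issued c j -> t <= time j) /\ all (fun m : msg => t <= m.2) (msgs c).

Inductive step : config -> config -> Prop :=
| IssueLocal c i :
    ~~ issued c i -> earliest c (time i) -> link c (node i) = node i ->
    step c (Config (link c) (upd (lastreq c) (node i) i) (upd (issued c) i true)
                   (msgs c) (upd (qpred c) i (Some (lastreq c (node i))))
                   (upd (qtime c) i (time i)))
| IssueSend c i :
    ~~ issued c i -> earliest c (time i) -> link c (node i) != node i ->
    step c (Config (upd (link c) (node i) (node i)) (upd (lastreq c) (node i) i)
                   (upd (issued c) i true)
                   (rcons (msgs c) (i, node i, link c (node i),
                          time i + elen R lvl (node i) (link c (node i))))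
                   (qpred c) (qtime c))
| DeliverQueue c m1 m2 i w u t :
    msgs c = m1 ++ (i, w, u, t) :: m2 -> earliest c t -> link c u = u ->
    step c (Config (upd (link c) u w) (lastreq c) (issued c) (m1 ++ m2)
                   (upd (qpred c) i (Some (lastreq c u))) (upd (qtime c) i t))
| DeliverForward c m1 m2 i w u t :
    msgs c = m1 ++ (i, w, u, t) :: m2 -> earliest c t -> link c u != u ->
    step c (Config (upd (link c) u w) (lastreq c) (issued c)
                   (rcons (m1 ++ m2) (i, u, link c u, t + elen R lvl u (link c u)))
                   (qpred c) (qtime c)).

Inductive reach : config -> config -> Prop :=
| reach_refl c : reach c c
| reach_step c1 c2 c3 : step c1 c2 -> reach c2 c3 -> reach c1 c3.

Definition final (c : config) : Prop :=
  (forall i, issued c i) /\ msgs c = [::].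

Definition arrow_order (c : config) (s : seq 'I_N.+1) : Prop :=
  [/\ size s = N.+1, uniq s, nth ord0 s 0 = ord0
    & forall k, (k < N)%N -> qpred c (nth ord0 s k.+1) = Some (nth ord0 s k)].

Definition total_cost (c : config) : R :=
  \sum_(i < N.+1 | i != ord0) (qtime c i - time i).

End Arrow.

(* level-l subtree containing the (leaf) node of request i, identified by *)
(* its root, the level-l ancestor *)
Definition subtree_key (V : finType) (N : nat) (par : V -> V) (node : 'I_N.+1 -> V)
  (l : nat) (i : 'I_N.+1) : V := iter l par (node i).

(* n(l): number of level-l blocks = number of positions starting a maximal run *)
Definition nblocks (V : finType) (N : nat) (par : V -> V) (node : 'I_N.+1 -> V)
  (s : seq 'I_N.+1) (l : nat) : nat :=
  #|[set k : 'I_(size s) | ((k : nat) == 0%N) ||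
       (subtree_key par node l (nth ord0 s k) != subtree_key par node l (nth ord0 s k.-1))]|.

From mathcomp Require Import all_boot all_order all_algebra.
From mathcomp Require Import zify ring.
Import Order.TTheory GRing.Theory Num.Theory.
Set Implicit Arguments. Unset Strict Implicit. Unset Printing Implicit Defensive.

(* The latency of every request equals the tree distance from its leaf to the
   leaf of its predecessor in the Arrow order.  This is an invariant of the
   protocol: every find message walks away from its origin along a tree path,
   and its timestamp is the issue time plus the distance travelled.  The walk
   never turns back because every edge carries exactly one arrow, i.e. either a
   pointer or a message in flight, in one of its two directions.  The distance
   between two leaves is the sum of 2^(l+1) over the levels l at which their
   ancestors differ, and at level l the consecutive requests of the order
   differ n(l) - 1 times; summation by parts with delta(l+1) - delta(l) =
   2^(l+1) gives the formula. *)

Section HST.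
Variables (V : finType) (root : V) (par : V -> V) (lvl : V -> nat) (h : nat).
Hypothesis HT : is_HST2 root par lvl h.

Lemma lvl_root : lvl root = h. Proof. by case: HT. Qed.
Lemma par_root : par root = root. Proof. by case: HT. Qed.
Lemma lvl_par v : v != root -> lvl (par v) = (lvl v).+1.
Proof. by case: HT => _ _ + _; apply. Qed.

Lemma lvl_le_iter_root v : lvl v <= h /\ iter (h - lvl v) par v = root.
Proof.
have [n] := ubnP (\max_(u : V) lvl u - lvl v); elim: n v => // n IH v.
case: (eqVneq v root) => [->|v_neq] lt_n; first by rewrite lvl_root subnn.
have lvl_pv := lvl_par v_neq.
have le_max : lvl (par v) <= \max_(u : V) lvl u by apply: leq_bigmax.
have [le_h iter_h] := IH (par v) ltac:(lia).
split; first lia.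
have -> : h - lvl v = (h - lvl (par v)).+1 by lia.
by rewrite iterSr.
Qed.

Lemma lvl_le v : lvl v <= h. Proof. by case: (lvl_le_iter_root v). Qed.

Lemma lvl_lt v : v != root -> lvl v < h.
Proof. by move=> v_neq; have := lvl_le (par v); rewrite lvl_par. Qed.

Lemma iter_par_root v k : h - lvl v <= k -> iter k par v = root.
Proof.
move=> le_k; rewrite -(subnK le_k) iterD (proj2 (lvl_le_iter_root v)).
by elim: (k - _) => //= j ->; apply: par_root.
Qed.

Lemma lvl_iter v k : k <= h - lvl v -> lvl (iter k par v) = lvl v + k.
Proof.
elim: k => [|k IH] le_k /=; first by rewrite addn0.
have lvl_k := IH (ltnW le_k).
have k_neq : iter k par v != root.
  by apply/eqP => iter_k; rewrite iter_k lvl_root in lvl_k; lia.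
by rewrite /= lvl_par // lvl_k addnS.
Qed.

Definition ancb (u x : V) : bool := iter (lvl u) par x == u.

Lemma ancbP u x : lvl x = 0 -> reflect (anc par u x) (ancb u x).
Proof.
move=> leaf_x; apply: (iffP eqP) => [<-|[k <-]]; first by exists (lvl u).
case: (leqP k h) => le_kh; first by rewrite lvl_iter leaf_x //; lia.
by rewrite !iter_par_root ?lvl_root ?leaf_x //; lia.
Qed.

Lemma ancb_root x : ancb root x.
Proof. by rewrite /ancb lvl_root iter_par_root ?leq_subr. Qed.

Lemma ancb_par c x : c != root -> ancb c x -> ancb (par c) x.
Proof. by move=> c_neq /eqP anc_c; rewrite /ancb lvl_par //= anc_c. Qed.

Lemma ancb_sibling c c' x : c != root -> c' != root -> par c = par c' ->
  ancb c x -> ancb c' x -> c = c'.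
Proof.
move=> c_neq c'_neq par_eq /eqP <- /eqP <-.
by have := congr1 lvl par_eq; rewrite !lvl_par // => -[->].
Qed.

(* For a leaf y, the length of the tree path from y to u: 2^(lvl u) - 1 down
   from u to a leaf, plus 2^(l+1) for each level l >= lvl u at which the
   ancestors of y and u differ. *)
Definition dist (y u : V) : nat :=
  (2 ^ lvl u - 1) + \sum_(lvl u <= l < h) (iter l par y != iter (l - lvl u) par u) * 2 ^ l.+1.

Lemma dist_child y c : c != root ->
  if ancb c y then dist y (par c) = dist y c + 2 ^ lvl c
  else dist y c = dist y (par c) + 2 ^ lvl c.
Proof.
move=> c_neq; rewrite /dist /ancb lvl_par // (big_ltn (lvl_lt c_neq)) subnn /=.
set S := \sum_(_ <= l < h) _.
have -> : \sum_((lvl c).+1 <= l < h) (iter l par y != iter (l - lvl c) par c) * 2 ^ l.+1 = S.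
  apply: eq_big_nat => l /andP [lt_l _].
  by rewrite -iterSr; have -> : (l - (lvl c).+1).+1 = l - lvl c by lia.
have := expn_gt0 2 (lvl c); rewrite !expnS.
by case: (iter _ par y == c) => /=; lia.
Qed.

Lemma dist_leaves y z : lvl z = 0 ->
  dist y z = \sum_(l < h) (iter l par y != iter l par z) * 2 ^ l.+1.
Proof.
move=> leaf_z; rewrite /dist leaf_z add0n big_mkord.
by apply: eq_bigr => l _; rewrite subn0.
Qed.

Lemma dist_self y : lvl y = 0 -> dist y y = 0.
Proof. by move=> leaf_y; rewrite dist_leaves // big1 // => l _; rewrite eqxx. Qed.

Definition adj (a b : V) : bool :=
  ((a != root) && (par a == b)) || ((b != root) && (par b == a)).

Lemma adjC a b : adj a b = adj b a.
Proof. by rewrite /adj orbC. Qed.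

Definition edge_len (a b : V) : nat := 2 ^ minn (lvl a) (lvl b).

(* w is the neighbour of u on the tree path from u to y. *)
Definition toward (y u w : V) : bool :=
  adj u w && (dist y w + edge_len w u == dist y u).

Lemma adj_neq a b : adj a b -> a != b.
Proof.
have par_neq v : v != root -> par v != v.
  by move=> /lvl_par lvl_pv; apply/eqP => pv; rewrite pv in lvl_pv; lia.
by case/orP => /andP [/par_neq + /eqP <-] //; rewrite eq_sym.
Qed.

Lemma edge_len_par c : c != root ->
  edge_len c (par c) = 2 ^ lvl c /\ edge_len (par c) c = 2 ^ lvl c.
Proof. by move=> c_neq; rewrite /edge_len lvl_par //; split; congr (2 ^ _); lia. Qed.

Lemma toward_child y c : c != root -> toward y (par c) c = ancb c y.
Proof.
move=> c_neq; rewrite /toward /adj c_neq eqxx orbT (proj1 (edge_len_par c_neq)) /=.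
have := dist_child y c_neq; have : 0 < 2 ^ lvl c by rewrite expn_gt0.
by case: ancb => pos -> /=; rewrite ?eqxx //; apply/eqP; lia.
Qed.

Lemma toward_par y c : c != root -> toward y c (par c) = ~~ ancb c y.
Proof.
move=> c_neq; rewrite /toward /adj c_neq eqxx /= (proj2 (edge_len_par c_neq)).
have := dist_child y c_neq; have : 0 < 2 ^ lvl c by rewrite expn_gt0.
by case: ancb => pos -> /=; rewrite ?eqxx //; apply/eqP; lia.
Qed.

Lemma toward_adj y u w : toward y u w -> adj u w.
Proof. by case/andP. Qed.

Lemma toward_dist y u w : toward y u w -> dist y u = dist y w + edge_len w u.
Proof. by case/andP => _ /eqP. Qed.

Lemma toward_cases y u w : toward y u w ->
  [/\ w != root, par w = u & ancb w y] \/ [/\ u != root, par u = w & ~~ ancb u y].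
Proof.
move=> tw; case/orP: (toward_adj tw) => /andP [neq_root /eqP par_eq].
  by right; rewrite -par_eq toward_par in tw.
by left; rewrite -par_eq toward_child in tw.
Qed.

Lemma toward_uniq y u w x : toward y u w -> toward y u x -> w = x.
Proof.
case/toward_cases => [[w_neq <- anc_w]|[u_neq <- nanc_u]];
  case/toward_cases => [[x_neq par_x anc_x]|[_ <- nanc_x]] //.
- exact: ancb_sibling w_neq x_neq (esym par_x) anc_w anc_x.
- by rewrite ancb_par in nanc_x.
- by rewrite -par_x ancb_par in nanc_u.
Qed.

Lemma toward_flip y a b : adj a b -> toward y b a = ~~ toward y a b.
Proof.
by case/orP => /andP [neq_root /eqP <-]; rewrite toward_child // toward_par ?negbK.
Qed.

Lemma toward_self y w : lvl y = 0 -> toward y y w = false.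
Proof.
by move=> leaf_y; rewrite /toward dist_self // addn_eq0 /edge_len expn_eq0 !andbF.
Qed.

Lemma toward_away y u w x : toward y u w -> adj u x -> x != w -> toward y x u.
Proof.
move=> tw ux; rewrite (toward_flip y ux); apply: contra => tx.
by rewrite (toward_uniq tx tw).
Qed.
End HST.

Lemma mem_cat_cons (T : eqType) (x y : T) s1 s2 : x \in s1 ++ s2 -> x \in s1 ++ y :: s2.
Proof. by rewrite !mem_cat in_cons => /orP [] ->; rewrite ?orbT. Qed.

Section Arrow.
Variables (R : realFieldType) (V : finType) (root : V) (par : V -> V)
  (lvl : V -> nat) (h N : nat) (node : 'I_N.+1 -> V) (time : 'I_N.+1 -> R).

Local Notation config := (config R V N).
Local Notation step := (step lvl node time).

Definition arrows (c : config) (a b : V) : nat :=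
  (link c a == b) + count (fun m : msg R V N => (m.1.1.2 == a) && (m.1.2 == b)) (msgs c).

(* A step turns the pointer of a node into a message along the same edge, or
   a message into the reverse pointer, or both. *)
Lemma step_tokens c c' a b : step c c' -> a != b ->
  arrows c' a b + arrows c' b a = arrows c a b + arrows c b a.
Proof.
case=> {c c'}
  [c i _ _ _|c i _ _ _|c m1 m2 i w u t ms _ link_u|c m1 m2 i w u t ms _ _];
  rewrite /arrows /= ?ms -?cats1 ?count_cat /= /upd ?addn0 //.
- case: (eqVneq a (node i)) => [->|na]; case: (eqVneq b (node i)) => [->|nb];
    rewrite ?eqxx ?(eq_sym (node i)) //= => _;
    try rewrite (negbTE na); try rewrite (negbTE nb); lia.
- case: (eqVneq a u) => [->|na]; case: (eqVneq b u) => [->|nb];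
    rewrite ?eqxx ?link_u ?(eq_sym u) //= => _;
    try rewrite (negbTE na); try rewrite (negbTE nb); lia.
- case: (eqVneq a u) => [->|na]; case: (eqVneq b u) => [->|nb];
    rewrite ?eqxx ?(eq_sym u) //= => _;
    try rewrite (negbTE na); try rewrite (negbTE nb); lia.
Qed.

Hypotheses (HT : is_HST2 root par lvl h) (leaf_node : forall i, lvl (node i) = 0).

Local Notation adj := (adj root par).
Local Notation dist := (dist par lvl h).
Local Notation toward := (toward root par lvl h).

Record arrow_inv (c : config) : Prop := ArrowInv {
  inv_link u : (link c u == u) || adj u (link c u);
  inv_tokens a b : adj a b -> arrows c a b + arrows c b a = 1;
  inv_msgs i w u t : (i, w, u, t) \in msgs c ->
    toward (node i) u w /\ t = (time i + (dist (node i) u)%:R)%R;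
  inv_sink u : link c u = u -> node (lastreq c u) = u;
  inv_queued i j : qpred c i = Some j -> qtime c i = (time i + (dist (node i) (node j))%:R)%R
}.

Lemma inv_deliver c m1 m2 i w u t : arrow_inv c -> msgs c = m1 ++ (i, w, u, t) :: m2 ->
  [/\ toward (node i) u w, t = (time i + (dist (node i) u)%:R)%R, w != u,
      link c u != w & {subset m1 ++ m2 <= msgs c}].
Proof.
move=> inv_c ms; have /(inv_msgs inv_c) [tw ->] : (i, w, u, t) \in msgs c.
  by rewrite ms mem_cat in_cons eqxx orbT.
split=> //; first by rewrite eq_sym (adj_neq HT (toward_adj tw)).
- apply/eqP => link_u; have := inv_tokens inv_c (toward_adj tw).
  by rewrite /arrows ms !count_cat /= link_u !eqxx; lia.
- by move=> m; rewrite ms; apply: mem_cat_cons.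
Qed.

Lemma step_pointers c c' : step c c' -> arrow_inv c ->
  (forall u, (link c' u == u) || adj u (link c' u)) /\
  (forall u, link c' u = u -> node (lastreq c' u) = u).
Proof.
case=> {c c'} [c i _ _ link_i|c i _ _ link_i|c m1 m2 i w u t ms _ link_u
               |c m1 m2 i w u t ms _ link_u]
  inv_c; rewrite /= /upd; split; try exact: inv_link inv_c.
- by move=> u; case: (eqVneq u (node i)) => [->|_] //; apply: inv_sink.
- by move=> u; case: (eqVneq u (node i)) => [->|_]; rewrite ?eqxx ?(inv_link inv_c).
- by move=> u; case: (eqVneq u (node i)) => [->|_] //; apply: inv_sink.
all: have [tw _ w_neq_u _ _] := inv_deliver inv_c ms.
1,3: by move=> a; case: (eqVneq a u) => [->|_]; rewrite ?(toward_adj tw) ?orbT ?(inv_link inv_c).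
all: move=> a; case: (eqVneq a u) => [->|_]; last exact: inv_sink.
all: by move=> w_u; rewrite w_u eqxx in w_neq_u.
Qed.

Lemma step_timing c c' : step c c' -> arrow_inv c ->
  (forall i w u t, (i, w, u, t) \in msgs c' ->
     toward (node i) u w /\ t = (time i + (dist (node i) u)%:R)%R) /\
  (forall i j, qpred c' i = Some j -> qtime c' i = (time i + (dist (node i) (node j))%:R)%R).
Proof.
case=> {c c'} [c i _ _ link_i|c i _ _ link_i|c m1 m2 i w u t ms _ link_u
               |c m1 m2 i w u t ms _ link_u]
  inv_c; rewrite /= /upd.
- split=> [|j k]; first exact: inv_msgs inv_c.
  case: (eqVneq j i) => [->|_]; last exact: inv_queued.
  by case=> <-; rewrite (inv_sink inv_c) // dist_self ?leaf_node // addr0.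
- split=> [j w u t|]; last exact: inv_queued inv_c.
  have adj_ix : adj (node i) (link c (node i)).
    by move: (inv_link inv_c (node i)); rewrite (negbTE link_i).
  have tw : toward (node i) (link c (node i)) (node i).
    by rewrite (toward_flip HT (node i) adj_ix) toward_self ?leaf_node.
  rewrite mem_rcons in_cons => /orP [/eqP [-> -> -> ->]|]; last exact: inv_msgs.
  by split; rewrite // (toward_dist tw) dist_self ?leaf_node.
- have [_ t_eq _ _ sub] := inv_deliver inv_c ms.
  split=> [j w' u' t' /sub|j k]; first exact: inv_msgs.
  case: (eqVneq j i) => [->|_]; last exact: inv_queued.
  by case=> <-; rewrite t_eq (inv_sink inv_c).
- have [tw t_eq _ x_neq_w sub] := inv_deliver inv_c ms.
  have adj_ux : adj u (link c u) by move: (inv_link inv_c u); rewrite (negbTE link_u).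
  have tx := toward_away HT tw adj_ux x_neq_w.
  split=> [j w' u' t'|]; last exact: inv_queued inv_c.
  rewrite mem_rcons in_cons => /orP [/eqP [-> -> -> ->]|/sub]; last exact: inv_msgs.
  by split; rewrite // t_eq (toward_dist tx) natrD addrA.
Qed.

Lemma step_inv c c' : step c c' -> arrow_inv c -> arrow_inv c'.
Proof.
move=> st inv_c; have [links sinks] := step_pointers st inv_c.
have [msgs_ok queued] := step_timing st inv_c.
split=> // a b ab.
by rewrite (step_tokens st (adj_neq HT ab)) inv_tokens.
Qed.

Section Initial.
Variable link0 : V -> V.
Hypothesis link0_points : points_toward root par (node ord0) link0.

Local Notation v0 := (node ord0).

Lemma link0_toward u : u != v0 -> toward v0 u (link0 u).
Proof.
move=> u_neq; have [_ /(_ u u_neq) [link_anc link_nanc]] := link0_points.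
case: (boolP (ancb par lvl u v0)) => [/(ancbP HT u (leaf_node ord0)) anc_u|nanc_u].
  have [c_neq par_c /(ancbP HT _ (leaf_node ord0)) anc_c] := link_anc anc_u.
  by rewrite -{1}par_c toward_child.
have u_neq_root : u != root by apply: contraNneq nanc_u => ->; exact: (ancb_root HT).
rewrite link_nanc ?toward_par // => /(ancbP HT u (leaf_node ord0)).
by rewrite (negbTE nanc_u).
Qed.

Lemma link0_eq_toward a b : adj a b -> (link0 a == b) = toward v0 a b.
Proof.
case: (eqVneq a v0) => [->|a_neq] ab.
  by rewrite toward_self ?leaf_node // (proj1 link0_points) (negbTE (adj_neq HT ab)).
apply/eqP/idP => [<-|tb]; first exact: link0_toward.
exact: toward_uniq (link0_toward a_neq) tb.
Qed.

Lemma init_inv : arrow_inv (init_config R N link0).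
Proof.
split => //=.
- move=> u; case: (eqVneq u v0) => [->|u_neq]; first by rewrite (proj1 link0_points) eqxx.
  by rewrite (toward_adj (link0_toward u_neq)) orbT.
- move=> a b ab; rewrite /arrows /= !addn0 !link0_eq_toward // 1?adjC //.
  by rewrite (toward_flip HT _ ab); case: toward.
- move=> u link0_u; case: (eqVneq u v0) => [->//|u_neq].
  by have := adj_neq HT (toward_adj (link0_toward u_neq)); rewrite link0_u eqxx.
Qed.

Lemma reach_inv c : reach lvl node time (init_config R N link0) c -> arrow_inv c.
Proof.
move: init_inv; move: (init_config R N link0) => c0 inv_c0 reach_c.
by elim: reach_c inv_c0 => // c1 c2 c3 st _ IH /(step_inv st).
Qed.

End Initial.

Lemma total_cost_dist c s : arrow_inv c -> arrow_order c s ->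
  total_cost time c = (\sum_(k < N) (dist (node (nth ord0 s k.+1)) (node (nth ord0 s k)))%:R)%R.
Proof.
move=> inv_c [size_s uniq_s s0 qpred_s].
have /subset_cardP/(_ (subset_predT _)) s_full : #|s| = #|'I_N.+1|.
  by rewrite card_ord (card_uniqP uniq_s).
have perm_s : perm_eq (index_enum 'I_N.+1) s.
  by apply: uniq_perm; rewrite ?index_enum_uniq // => i; rewrite mem_index_enum s_full.
rewrite /total_cost (perm_big _ perm_s).
case: s size_s uniq_s s0 qpred_s {s_full perm_s} => // i0 s [size_s] + /= i0_eq.
rewrite {}i0_eq /= => /andP [ord0_notin uniq_s] qpred_s.
rewrite big_cons eqxx /= -big_filter.
have -> : [seq i <- s | i != ord0] = s.
  by apply/all_filterP/allP => i; apply: contraTneq => ->.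
rewrite (big_nth ord0) size_s big_mkord; apply: eq_bigr => k _.
by rewrite (inv_queued inv_c (qpred_s k (ltn_ord k))) addrAC subrr add0r.
Qed.

End Arrow.

Lemma nblocks_breaks (V : finType) (N : nat) (par : V -> V) (node : 'I_N.+1 -> V)
  (s : seq 'I_N.+1) (l : nat) : 0 < size s ->
  nblocks par node s l = 1 + \sum_(k < (size s).-1)
    (subtree_key par node l (nth ord0 s k.+1) != subtree_key par node l (nth ord0 s k)).
Proof.
rewrite /nblocks -sum1_card big_mkcond /=; case: s => // i0 s _ /=.
rewrite big_ord_recl inE eqxx /=; congr (_ + _); apply: eq_bigr => k _.
by rewrite inE /=; case: (_ != _).
Qed.

Lemma deltaS l : delta l.+1 = delta l + 2 ^ l.+1.
Proof. by rewrite /delta !expnS; have := expn_gt0 2 l; lia. Qed.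

Lemma sum_by_parts_delta (R : comPzRingType) (a : nat -> R) n :
  (\sum_(l < n) (a l - a l.+1) * (delta l.+1)%:R =
   \sum_(l < n) a l * (2 ^ l.+1)%:R - a n * (delta n)%:R)%R.
Proof.
elim: n => [|n IH]; first by rewrite !big_ord0 mulr0 subr0.
by rewrite !big_ord_recr /= IH deltaS natrD; ring.
Qed.

Local Open Scope ring_scope.

Theorem lemma6 (R : realFieldType) (V : finType) (root : V) (par : V -> V)
  (lvl : V -> nat) (h N : nat) (node : 'I_N.+1 -> V) (time : 'I_N.+1 -> R)
  (link0 : V -> V) (c : config R V N) (s : seq 'I_N.+1) :
  is_HST2 root par lvl h ->
  (forall i, lvl (node i) = 0%N) ->
  time ord0 = 0 ->
  (forall i, 0 <= time i) ->
  (forall i j, node i = node j -> time i = time j -> i = j) ->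
  points_toward root par (node ord0) link0 ->
  reach lvl node time (init_config R N link0) c ->
  final c ->
  arrow_order c s ->
  total_cost time c =
    \sum_(l < h) (((nblocks par node s l)%:R - (nblocks par node s l.+1)%:R)
                  * (delta l.+1)%:R).
Proof.
move=> HT leaf_node _ _ _ link0_points reach_c _ order_s.
rewrite (total_cost_dist (reach_inv HT leaf_node link0_points reach_c) order_s).
case: order_s => size_s _ _ _.
pose breaks l := (\sum_(k < N) (subtree_key par node l (nth ord0 s k.+1)
                                != subtree_key par node l (nth ord0 s k)))%N.
have nblocksE l : nblocks par node s l = (1 + breaks l)%N by rewrite nblocks_breaks size_s.
have breaks_h : breaks h = 0%N.
  by rewrite /breaks big1 // => k _; rewrite /subtree_key !(iter_par_root HT) ?leq_subr ?eqxx.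
under [RHS]eq_bigr do rewrite !nblocksE !natrD opprD addrACA subrr add0r.
rewrite (sum_by_parts_delta (fun l => (breaks l)%:R)) breaks_h mul0r subr0.
under [RHS]eq_bigr do rewrite -natrM.
rewrite -!natr_sum; congr _%:R.
under eq_bigr do rewrite (dist_leaves par h _ (leaf_node _)).
by rewrite exchange_big; apply: eq_bigr => l _; rewrite /breaks big_distrl.
Qed.
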